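(* Let a tiling of the sphere by angle congruent pentagons have pentagon with five pairwise distinct angles $\alpha,\beta,\gamma,\delta,\epsilon$, and suppose every vertex is of one of the types $\alpha\beta\gamma$, $\delta^3$, $\epsilon^4$. Then, up to permuting the labels $\alpha,\beta,\gamma$ and reflection, the tiling is the pentagonal subdivision of the cube, with $\delta$ at the original cube vertices, $\epsilon$ at the face centers, and $\alpha,\beta,\gamma$ at the vertices added on edges; in particular $\delta$ and $\epsilon$ are not adjacent corners in the pentagon. The same conclusion with $\epsilon^4$ replaced by $\epsilon^5$ holds with the cube replaced by the dodecahedron.
   Context: A spherical tiling by angle congruent pentagons: embedded graph in the sphere, all faces pentagons, edge-to-edge, every vertex of degree $\ge3$; each corner carries a positive real angle; angles at each vertex sum to $2\pi$; all tiles have the same cyclic sequence of corner angles up to rotation and reflection. Vertex type $\alpha\beta\gamma$ means a degree $3$ vertex with corner angles $\alpha,\beta,\gamma$; $\delta^3$ a degree $3$ vertex with all corners $\delta$; $\epsilon^4$ (resp. $\epsilon^5$) a degree $4$ (resp. $5$) vertex with all corners $\epsilon$. Pentagonal subdivision of a tiling of the oriented sphere: add a vertex at the center of each tile and two vertices on each edge; orienting each tile's boundary, call the two new vertices on each boundary edge first and second along this direction; join the center to the second new vertex of each boundary edge. *)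

From Stdlib Require Import Reals.
From Stdlib Require Import Sorting.Permutation.
From mathcomp Require Import all_boot all_fingroup.

Set Implicit Arguments.
Unset Strict Implicit.
Unset Printing Implicit Defensive.

(* Combinatorial maps (rotation systems).                                     *)
(*   D      : finite set of darts (half-edges),                               *)
(*   sigma  : rotation of the darts around their common vertex,               *)
(*   alpha  : the other half of the same edge (fixed-point free involution).  *)
(* Vertices = sigma-orbits, edges = alpha-orbits.  The dart d also names the  *)
(* corner of the tiling at the vertex of d between d and sigma d; the corners *)
(* of one tile (face), in cyclic order along its boundary, form an orbit of   *)
(*   face_next := alpha \o sigma.                                             *)
(* A connected map whose Euler characteristic V - E + F equals 2 is exactly   *)
(* a (cellularly) embedded connected graph in the oriented sphere.            *)

Section Maps.
Variable D : finType.
Variables sigma alpha : D -> D.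

Definition face_next (d : D) : D := alpha (sigma d).

Definition nb_vertices : nat := n_comp (frel sigma) predT.
Definition nb_faces : nat := n_comp (frel face_next) predT.

Definition sphere_map : Prop :=
  [/\ injective sigma,
      (forall d, alpha (alpha d) = d),
      (forall d, alpha d != d),
      (forall x y, connect (fun a b => (b == sigma a) || (b == alpha a)) x y)
    & (* Euler's formula  V - E + F = 2,  with E = #|D|/2 *)
      (nb_vertices + nb_faces).*2 = #|D| + 4 ].

Definition degree (d : D) : nat := fingraph.order sigma d.

Definition pentagonal_tiling : Prop :=
  [/\ sphere_map,
      (forall d, fingraph.order face_next d = 5),
      (forall d i j, i < j < 5 ->
          ~~ fconnect sigma (iter i face_next d) (iter j face_next d))
    & (forall d, 3 <= degree d) ].

Variable angle : D -> R.

Definition vertex_angles (d : D) : seq R := map angle (fingraph.orbit sigma d).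

Definition tile_angles (d : D) : seq R := map angle (traject face_next d 5).

Definition angle_congruent (p : seq R) : Prop :=
  [/\ pentagonal_tiling,
      (forall d, Rlt R0 (angle d)),
      (forall d, foldr Rplus R0 (vertex_angles d) = Rmult (IZR 2) PI)
    & (forall d, exists k, tile_angles d = rot k p \/ tile_angles d = rot k (rev p)) ].

End Maps.

(* Pentagonal subdivision of a map (B, sB, aB), the sphere being oriented by  *)
(* the rotations sB, and tiles oriented by the face walk face_next.           *)
(* For every dart d of B (half-edge at vertex u along edge e) let p(d) be the *)
(* new vertex on e nearer to u.  The new darts are B * 'I_5 with kinds        *)
(*   kA (0): at u, towards p(d);                                              *)
(*   kB (1): at p(d), towards u;                                              *)
(*   kC (2): at p(d), towards p(alpha d) (middle part of e);                  *)
(*   kS (3): at p(d), towards the center of the tile containing corner d;     *)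
(*   kT (4): at that center, towards p(d).                                    *)
(* p(d) is the *second* new vertex of e for the boundary orientation of the   *)
(* tile containing corner d, so the spokes S/T are exactly the segments       *)
(* "center -- second new vertex of each boundary edge".                       *)
(* Kind kA darts sit at the original vertices, kT darts at the tile centers,  *)
(* and kB, kC, kS darts at the vertices added on the edges.                   *)

Definition kA : 'I_5 := @Ordinal 5 0 isT.
Definition kB : 'I_5 := @Ordinal 5 1 isT.
Definition kC : 'I_5 := @Ordinal 5 2 isT.
Definition kS : 'I_5 := @Ordinal 5 3 isT.
Definition kT : 'I_5 := @Ordinal 5 4 isT.

Section PentSubdiv.
Variable B : finType.
Variables sB aB : B -> B.

Definition ps_sigma (x : B * 'I_5) : B * 'I_5 :=
  let: (d, k) := x in
  match nat_of_ord k with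
  | 0 => (sB d, kA)
  | 1 => (d, kC)
  | 2 => (d, kS)
  | 3 => (d, kB)
  | _ => (finv (face_next sB aB) d, kT)
  end.

Definition ps_alpha (x : B * 'I_5) : B * 'I_5 :=
  let: (d, k) := x in
  match nat_of_ord k with
  | 0 => (d, kB)
  | 1 => (d, kA)
  | 2 => (aB d, kC)
  | 3 => (d, kT)
  | _ => (d, kS)
  end.

End PentSubdiv.

(* The cube: vertices {0,1}^3, the dart (v, i) is the edge at v in the        *)
(* direction of coordinate i; the cyclic order of the 3 directions at v is    *)
(* reversed according to the parity of v (consistent orientation).            *)

Notation cube_dart := ({ffun 'I_3 -> bool} * 'I_3)%type.

Definition parity3 (v : {ffun 'I_3 -> bool}) : bool :=
  v (@Ordinal 3 0 isT) (+) v (@Ordinal 3 1 isT) (+) v (@Ordinal 3 2 isT).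

Definition cube_sigma (x : cube_dart) : cube_dart :=
  let: (v, i) := x in
  (v, if parity3 v then ord_pred i else ordS i).

Definition cube_alpha (x : cube_dart) : cube_dart :=
  let: (v, i) := x in
  ([ffun j => if j == i then ~~ v j else v j], i).

(* The dodecahedron, as the regular map of type {5,3} whose darts are the    *)
(* rotations of the dodecahedron, i.e. the alternating group A5: sigma is    *)
(* right multiplication by an element of order 3, alpha by an involution,    *)
(* and alpha \o sigma (faces) has order 5.  V = 20, E = 30, F = 12.          *)

Notation dodeca_dart := {g : {perm 'I_5} | ~~ odd_perm g}.

Definition dod_s : {perm 'I_5} := (tperm (@Ordinal 5 0 isT) (@Ordinal 5 1 isT) * tperm (@Ordinal 5 1 isT) (@Ordinal 5 2 isT))%g.
Definition dod_a : {perm 'I_5} := (tperm (@Ordinal 5 0 isT) (@Ordinal 5 3 isT) * tperm (@Ordinal 5 1 isT) (@Ordinal 5 4 isT))%g.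

Lemma even_dod_s : ~~ odd_perm dod_s.
Proof. by rewrite /dod_s /dod_a odd_permM !odd_tperm. Qed.

Lemma even_dod_a : ~~ odd_perm dod_a.
Proof. by rewrite /dod_s /dod_a odd_permM !odd_tperm. Qed.

Lemma even_mul (g h : {perm 'I_5}) :
  ~~ odd_perm g -> ~~ odd_perm h -> ~~ odd_perm (g * h)%g.
Proof. by rewrite odd_permM; case: (odd_perm g); case: (odd_perm h). Qed.

Definition dodeca_sigma (x : dodeca_dart) : dodeca_dart :=
  exist _ (val x * dod_s)%g (even_mul (valP x) even_dod_s).

Definition dodeca_alpha (x : dodeca_dart) : dodeca_dart :=
  exist _ (val x * dod_a)%g (even_mul (valP x) even_dod_a).

Definition is_psubdiv_of (D : finType) (sigma alpha : D -> D) (angle : D -> R)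
    (a b c d e : R) (B : finType) (sB aB : B -> B) : Prop :=
  exists phi : D -> B * 'I_5,
    [/\ bijective phi,
        (forall x, phi (alpha x) = ps_alpha aB (phi x)),
        (* orientation preserving, or reversing (reflection) *)
        (forall x, phi (sigma x) = ps_sigma sB aB (phi x)) \/
        (forall x, ps_sigma sB aB (phi (sigma x)) = phi x)
      & forall x,
          [/\ angle x = d <-> (phi x).2 = kA,
              angle x = e <-> (phi x).2 = kT
            & (angle x = a \/ angle x = b \/ angle x = c) <->
              ((phi x).2 = kB \/ (phi x).2 = kC \/ (phi x).2 = kS)] ].

Definition de_not_adjacent (D : finType) (sigma alpha : D -> D) (angle : D -> R)
    (d e : R) : Prop :=
  forall x, ~ (angle x = d /\ angle (face_next sigma alpha x) = e) /\
            ~ (angle x = e /\ angle (face_next sigma alpha x) = d).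

From HB Require Import structures.
From Stdlib Require Import Reals.
From Stdlib Require Import Sorting.Permutation.
From mathcomp Require Import all_boot all_fingroup alt ssralg zmodp ring zify.

Set Implicit Arguments.
Unset Strict Implicit.
Unset Printing Implicit Defensive.
Import GRing.Theory.

(* Label every corner by the position of its angle in the
     pentagon, counted from epsilon.  The vertex types force delta and epsilon
     to be non-adjacent in the pentagon and every tile to be read in the same
     direction; the position of a corner relative to epsilon then becomes a
     "kind" in 'I_5 which sigma and alpha transform exactly as they transform
     the five kinds of darts of a pentagonal subdivision (possibly mirrored).
   - Counting.  The five label classes have the same size and Euler's formula
     leaves 120 darts (epsilon^4) or 300 darts (epsilon^5).
   - Rigidity.  A connected map with kinds compatible with the relators
     alpha^2, (alpha sigma)^5 and sigma^degree and with the size of the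
     subdivided cube (resp. dodecahedron) is isomorphic to it.  This is a
     coset enumeration (Todd-Coxeter) argument: a checker, proved sound once
     and for all, validates a certificate computed by [vm_compute] on an
     explicit encoding of the target map. *)

(* A word [w : seq bool] acts on a set with two operations: [true] applies
   the rotation [s], [false] the involution [a], letters read left to right. *)
Section Walks.
Variables (T : Type) (s a : T -> T).

Definition act (g : bool) : T -> T := if g then s else a.
Definition walk (w : seq bool) (x : T) : T := foldl (fun y g => act g y) x w.

Lemma walk_rcons w g x : walk (rcons w g) x = act g (walk w x).
Proof. by rewrite /walk -cats1 foldl_cat. Qed.

Lemma walk_nseq k x : walk (nseq k true) x = iter k s x.
Proof. by elim: k x => // k IH x; rewrite iterSr -IH. Qed.

End Walks.

Lemma walk_morph (T T' : Type) (s a : T -> T) (s' a' : T' -> T') (h : T -> T') :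
  (forall x, h (s x) = s' (h x)) -> (forall x, h (a x) = a' (h x)) ->
  forall w x, h (walk s a w x) = walk s' a' w (h x).
Proof.
move=> hs ha; elim=> // g w IH x.
rewrite /walk /= -/(walk s a w _) -/(walk s' a' w _) IH.
by case: g; rewrite /= ?hs ?ha.
Qed.

Lemma iter_morph (T T' : Type) (f : T -> T) (f' : T' -> T') (h : T -> T') :
  (forall x, h (f x) = f' (h x)) -> forall k x, h (iter k f x) = iter k f' (h x).
Proof. by move=> hf; elim=> //= k IH x; rewrite hf IH. Qed.

Lemma foldl_ind (T : Type) (S : eqType) (P : T -> Prop) (f : T -> S -> T) (s : seq S) x :
  (forall y z, z \in s -> P y -> P (f y z)) -> P x -> P (foldl f x s).
Proof.
elim: s x => //= z s IH x step Px; apply: IH => [y z' zs|]; last exact: step (mem_head _ _) Px.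
by apply: step; rewrite inE zs orbT.
Qed.

(* Exploration, round by round, of the states reachable from [u0], each state
   recorded with a word reaching it.  Only its output is ever checked, so
   nothing is proved about it. *)
Section Search.
Variables (U : eqType) (s a : U -> U) (u0 : U).

Definition extend (S : seq (U * seq bool)) (uw : U * seq bool) :=
  if uw.1 \in map fst S then S else rcons S uw.

Definition grow (S : seq (U * seq bool)) :=
  foldl (fun S' uw => extend (extend S' (s uw.1, rcons uw.2 true)) (a uw.1, rcons uw.2 false)) S S.

Definition spanning (rounds : nat) : seq (U * seq bool) := iter rounds grow [:: (u0, [::])].

End Search.

(* Coset enumeration on a finite model with states [0 .. size ks - 1]: the
   two operations are tabulated by [ts] and [ta], [ks] gives the kind of each
   state and [ws] a word reaching it from state 0.  A pair (state i, letter g)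
   is an edge; [E] records the edges already known to be compatible with the
   map under study.  Tracing a relator from state [i] along known edges and
   returning to [i] by a single unknown edge makes that edge known. *)
Section Tables.
Variables (K : eqType) (rels : K -> seq (seq bool)) (k0 : K).
Variables (ts ta : seq nat) (ks : seq K) (ws : seq (seq bool)).

Definition tnext (g : bool) (i : nat) : nat := nth 0 (if g then ts else ta) i.

Definition edges := (seq bool * seq bool)%type.

Definition known (E : edges) (i : nat) (g : bool) : bool :=
  nth false (if g then E.1 else E.2) i.

Definition mark (E : edges) (i : nat) (g : bool) : edges :=
  if g then (set_nth false E.1 i true, E.2) else (E.1, set_nth false E.2 i true).

Fixpoint trace (E : edges) (i : nat) (w : seq bool) (t : nat) : option (nat * bool) :=
  match w with
  | [::] => None
  | [:: g] => if tnext g i == t then Some (i, g) else None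
  | g :: w' => if known E i g then trace E (tnext g i) w' t else None
  end.

Definition deduce (E : edges) (i : nat) (w : seq bool) : edges :=
  if trace E i w i is Some (j, g) then mark E j g else E.

Definition pass (E : edges) : edges :=
  foldl (fun E i => foldl (fun E w => deduce E i w) E (rels (nth k0 ks i))) E (iota 0 (size ks)).

Definition tree_edges : edges :=
  ([seq nth [::] ws (tnext true i) == rcons (nth [::] ws i) true | i <- iota 0 (size ks)],
   [seq nth [::] ws (tnext false i) == rcons (nth [::] ws i) false | i <- iota 0 (size ks)]).

Definition complete (E : edges) : bool :=
  all (fun i => known E i true && known E i false) (iota 0 (size ks)).

Definition saturates (fuel : nat) : bool := complete (iter fuel pass tree_edges).

Lemma known_mark E i g j h :
  known (mark E i g) j h = ((j == i) && (h == g)) || known E j h.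
Proof.
by case: g h => -[]; rewrite /known /mark /= ?nth_set_nth /=; case: eqP.
Qed.

End Tables.

Section Respect.
Variables (K : eqType) (rels : K -> seq (seq bool)) (k0 : K) (KS KA : K -> K).
Variables (ts ta : seq nat) (ks : seq K) (ws : seq (seq bool)).
Local Notation n := (size ks).
Local Notation tnext := (tnext ts ta).
Hypothesis tnext_lt : forall g i, i < n -> tnext g i < n.

Variables (D : Type) (sD aD : D -> D) (kD : D -> K) (x0 : D).
Hypothesis kD_s : forall x, kD (sD x) = KS (kD x).
Hypothesis kD_a : forall x, kD (aD x) = KA (kD x).
Hypothesis rels_hold : forall x w, w \in rels (kD x) -> walk sD aD w x = x.
Hypothesis kinds_ws : forall i, i < n -> walk KS KA (nth [::] ws i) (kD x0) = nth k0 ks i.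

Definition lift_state (i : nat) : D := walk sD aD (nth [::] ws i) x0.
Local Notation psi := lift_state.

Lemma kind_lift i : i < n -> kD (psi i) = nth k0 ks i.
Proof. by move=> lt; rewrite /psi (walk_morph kD_s kD_a) kinds_ws. Qed.

Definition respected (E : edges) : Prop :=
  forall i g, i < n -> known E i g -> psi (tnext g i) = act sD aD g (psi i).

Lemma respected_tree : respected (tree_edges ts ta ks ws).
Proof.
move=> i g lt; rewrite /known /tree_edges.
by case: g; rewrite /= (nth_map 0) ?size_iota // nth_iota // add0n => /eqP e;
  rewrite /psi e walk_rcons.
Qed.

Lemma trace_sound E : respected E -> forall w i t j g, i < n ->
  trace ts ta E i w t = Some (j, g) ->
  j < n /\ (walk sD aD w (psi i) = psi t -> psi (tnext g j) = act sD aD g (psi j)).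
Proof.
move=> HE; elim=> // g w IH i t j h lt /=.
case: w IH => [|g' w] IH.
  by case: eqP => // e [<- <-]; split=> // e'; rewrite e -e'.
case kn: (known E i g) => // /IH [|lj H]; first exact: tnext_lt.
by split=> // e; apply: H; rewrite HE.
Qed.

Lemma deduce_sound E i w : respected E -> i < n -> w \in rels (nth k0 ks i) ->
  respected (deduce ts ta E i w).
Proof.
move=> HE lt wi; rewrite /deduce; case et: trace => [[j g]|] //.
have [lj Hj] := trace_sound HE lt et.
have new : psi (tnext g j) = act sD aD g (psi j).
  by apply: Hj; apply: rels_hold; rewrite kind_lift.
move=> i' g' li'; rewrite known_mark => /orP [/andP [/eqP -> /eqP ->] //|].
exact: HE.
Qed.

Lemma pass_sound E : respected E -> respected (pass rels k0 ts ta ks E).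
Proof.
move=> HE; apply: (foldl_ind (P := respected)) HE => E' i; rewrite mem_iota add0n => lt HE'.
by apply: (foldl_ind (P := respected)) HE' => E'' w wr HE''; apply: deduce_sound.
Qed.

(* A saturated table is a quotient of any such map: the lifting commutes
   with both operations. *)
Lemma saturation_sound fuel : saturates rels k0 ts ta ks ws fuel ->
  forall i g, i < n -> psi (tnext g i) = act sD aD g (psi i).
Proof.
have HE : respected (iter fuel (pass rels k0 ts ta ks) (tree_edges ts ta ks ws)).
  by elim: fuel => [|k IH] /=; [exact: respected_tree | exact: pass_sound].
move=> /allP comp i g lt; apply: HE => //.
have /comp /andP [] : i \in iota 0 n by rewrite mem_iota.
by case: g.
Qed.

End Respect.

Section Certified.
Variables (K : eqType) (rels : K -> seq (seq bool)) (KS KA : K -> K).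
Variables (U : eqType) (sU aU : U -> U) (kU : U -> K) (u0 : U).

Definition tabulate (f : U -> U) (st : seq U) : seq nat := [seq index (f u) st | u <- st].

Definition certificate_ok (st : seq U) (ws : seq (seq bool)) (fuel : nat) : bool :=
  [&& 0 < size st, uniq st, all (fun u => (sU u \in st) && (aU u \in st)) st,
      all (fun i => (walk sU aU (nth [::] ws i) u0 == nth u0 st i)
                    && (walk KS KA (nth [::] ws i) (kU u0) == kU (nth u0 st i)))
          (iota 0 (size st))
    & saturates rels (kU u0) (tabulate sU st) (tabulate aU st) (map kU st) ws fuel].

Definition certify (rounds fuel : nat) : bool :=
  let c := spanning sU aU u0 rounds in certificate_ok (map fst c) (map snd c) fuel.

Variables (st : seq U) (ws : seq (seq bool)) (fuel : nat).
Hypothesis cert : certificate_ok st ws fuel.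
Local Notation n := (size st).
Local Notation tnext := (tnext (tabulate sU st) (tabulate aU st)).

Lemma cert_closed u g : u \in st -> act sU aU g u \in st.
Proof.
case/and5P: cert => _ _ /allP closed _ _ /closed /andP [].
by case: g.
Qed.

Lemma tnext_state g i : i < n ->
  tnext g i < n /\ nth u0 st (tnext g i) = act sU aU g (nth u0 st i).
Proof.
move=> lt; have := cert_closed g (mem_nth u0 lt).
rewrite /tnext; case: g; rewrite /= (nth_map u0) // => mem;
  by rewrite index_mem nth_index.
Qed.

Lemma cert_words i : i < n ->
  walk sU aU (nth [::] ws i) u0 = nth u0 st i /\
  walk KS KA (nth [::] ws i) (kU u0) = kU (nth u0 st i).
Proof.
case/and5P: cert => _ _ _ /allP words _ lt.
by have /words /andP [/eqP -> /eqP ->] : i \in iota 0 n by rewrite mem_iota.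
Qed.

(* The words of the certificate, evaluated in [T], enumerate distinct darts
   and commute with the tables, because their codes do. *)
Section Target.
Variables (T : finType) (sT aT : T -> T) (kT : T -> K) (F : T -> U) (t0 : T).
Hypotheses (F_inj : injective F) (F_s : forall t, F (sT t) = sU (F t)).
Hypotheses (F_a : forall t, F (aT t) = aU (F t)) (F_k : forall t, kU (F t) = kT t).
Hypothesis F_t0 : F t0 = u0.

Local Notation psiT := (lift_state ws sT aT t0).

Lemma F_lift i : i < n -> F (psiT i) = nth u0 st i.
Proof. by move=> lt; rewrite /lift_state (walk_morph F_s F_a) F_t0; case: (cert_words lt). Qed.

Lemma target_act g i : i < n -> psiT (tnext g i) = act sT aT g (psiT i).
Proof.
move=> lt; have [lt' st_g] := tnext_state g lt; apply: F_inj.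
rewrite (F_lift lt') st_g -(F_lift lt).
by case: g {lt' st_g}; rewrite /= ?F_s ?F_a.
Qed.

Lemma target_inj i j : i < n -> j < n -> psiT i = psiT j -> i = j.
Proof.
move=> li lj /(congr1 F); rewrite !F_lift // => /eqP.
by rewrite nth_uniq //; [move/eqP | case/and5P: cert].
Qed.

Lemma size_le_target : n <= #|T|.
Proof.
rewrite cardE -(size_iota 0 n) -(size_map psiT); apply: uniq_leq_size => [|t _]; last by rewrite mem_enum.
rewrite map_inj_in_uniq ?iota_uniq // => i j; rewrite !mem_iota !add0n.
exact: target_inj.
Qed.

(* In the kinded map [D] the lifting commutes with the tables (saturation),
   is onto (connectedness) and hence is a bijection (cardinality). *)
Section Source.
Variables (D : finType) (sD aD : D -> D) (kD : D -> K) (x0 : D).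
Hypotheses (kD_s : forall x, kD (sD x) = KS (kD x)) (kD_a : forall x, kD (aD x) = KA (kD x)).
Hypothesis rels_hold : forall x w, w \in rels (kD x) -> walk sD aD w x = x.
Hypothesis kD_x0 : kD x0 = kU u0.
Hypothesis connected : forall x y, connect (fun u v => (v == sD u) || (v == aD u)) x y.
Hypothesis card_DT : #|D| = #|T|.

Local Notation psiD := (lift_state ws sD aD x0).

Lemma source_act g i : i < n -> psiD (tnext g i) = act sD aD g (psiD i).
Proof.
have ks_n : size (map kU st) = n by rewrite size_map.
have sat : saturates rels (kU u0) (tabulate sU st) (tabulate aU st) (map kU st) ws fuel.
  by case/and5P: cert.
move=> lt; apply: (saturation_sound _ kD_s kD_a rels_hold _ sat); rewrite ?ks_n //.
- by move=> g' i' /(tnext_state g') [].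
- by move=> i' li; rewrite kD_x0 (nth_map u0) //; case: (cert_words li).
Qed.

Lemma source_onto x : exists2 i, i < n & psiD i = x.
Proof.
have n_pos : 0 < n by case/andP: cert.
suff reach i p : i < n -> path (fun u v => (v == sD u) || (v == aD u)) (psiD i) p ->
    exists2 j, j < n & psiD j = last (psiD i) p.
  case/connectP: (connected (psiD 0) x) => p path_p ->.
  exact: reach 0 p n_pos path_p.
elim: p i => [|y p IH] i lt /=; first by exists i.
case/andP => /orP [] /eqP -> {y} path_p.
- by rewrite -[sD _](source_act true lt) in path_p *; apply: IH path_p; case: (tnext_state true lt).
- by rewrite -[aD _](source_act false lt) in path_p *; apply: IH path_p; case: (tnext_state false lt).
Qed.

Lemma source_uniq : uniq (map psiD (iota 0 n)).
Proof.
apply: (@leq_size_uniq _ (enum D)); first exact: enum_uniq.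
  by move=> x _; have [i lt <-] := source_onto x; apply: map_f; rewrite mem_iota.
by rewrite size_map size_iota -cardE card_DT size_le_target.
Qed.

Definition source_index (x : D) : nat := index x (map psiD (iota 0 n)).

Lemma source_indexK x : source_index x < n /\ psiD (source_index x) = x.
Proof.
have [i lt <-] := source_onto x.
have mem : psiD i \in map psiD (iota 0 n) by apply: map_f; rewrite mem_iota.
have lt' : source_index (psiD i) < n by rewrite -(size_iota 0 n) -(size_map psiD) index_mem.
split=> //; rewrite -{2}(nth_index x0 mem) (nth_map 0) ?nth_iota ?size_iota //.
Qed.

Lemma source_inj i j : i < n -> j < n -> psiD i = psiD j -> i = j.
Proof.
move=> li lj e; apply/eqP.
rewrite -(nth_uniq x0 _ _ source_uniq) ?size_map ?size_iota //.
by rewrite !(nth_map 0) ?size_iota // !nth_iota // e.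
Qed.

Lemma source_index_act g x : source_index (act sD aD g x) = tnext g (source_index x).
Proof.
have [lt ex] := source_indexK x; have [lt' ex'] := source_indexK (act sD aD g x).
apply: source_inj => //; first by case: (tnext_state g lt).
by rewrite ex' source_act // ex.
Qed.

Lemma source_kind i : i < n -> kD (psiD i) = kU (nth u0 st i).
Proof. by move=> lt; rewrite /lift_state (walk_morph kD_s kD_a) kD_x0; case: (cert_words lt). Qed.

(* The isomorphism is the lifting to [T] composed with the inverse of the
   lifting to [D]. *)
Theorem certified_iso : exists phi : D -> T,
  [/\ bijective phi, forall x, phi (sD x) = sT (phi x),
      forall x, phi (aD x) = aT (phi x) & forall x, kT (phi x) = kD x].
Proof.
exists (fun x => psiT (source_index x)); split.
- apply: inj_card_bij; last by rewrite card_DT.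
  move=> x y /target_inj; case: (source_indexK x) (source_indexK y) => [lx ex] [ly ey].
  by move=> /(_ lx ly) e; rewrite -ex -ey e.
- by move=> x; rewrite (source_index_act true) target_act //; case: (source_indexK x).
- by move=> x; rewrite (source_index_act false) target_act //; case: (source_indexK x).
- move=> x; have [lt ex] := source_indexK x.
  by rewrite -F_k F_lift // -{2}ex source_kind.
Qed.

End Source.
End Target.
End Certified.

Definition kind_sigma (k : 'I_5) : 'I_5 := nth kA [:: kA; kC; kS; kB; kT] k.
Definition kind_alpha (k : 'I_5) : 'I_5 := nth kA [:: kB; kA; kC; kT; kS] k.

Definition relators (ne : nat) (k : 'I_5) : seq (seq bool) :=
  [:: [:: false; false]; flatten (nseq 5 [:: true; false]); flatten (nseq 5 [:: false; true]);
      nseq (if k == kT then ne else 3) true].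

Lemma walk_flatten_nseq (T : Type) (s a : T -> T) k w x :
  walk s a (flatten (nseq k w)) x = iter k (walk s a w) x.
Proof. by elim: k x => // k IH x; rewrite iterSr -IH /walk /= foldl_cat. Qed.

Definition kinded_map (ne : nat) (D : finType) (s a : D -> D) (k : D -> 'I_5) : Prop :=
  [/\ (forall x, k (s x) = kind_sigma (k x)) /\ (forall x, k (a x) = kind_alpha (k x)),
      involutive a, (forall x, iter 5 (face_next s a) x = x),
      (forall x, iter (if k x == kT then ne else 3) s x = x)
    & forall x y, connect (fun u v => (v == s u) || (v == a u)) x y].

(* (sigma alpha)^5 is conjugate by alpha to (alpha sigma)^5. *)
Lemma sigma_alpha_period (D : finType) (s a : D -> D) :
  involutive a -> (forall x, iter 5 (face_next s a) x = x) ->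
  forall x, iter 5 (fun y => s (a y)) x = x.
Proof.
move=> aK face5 x; have conj j y : a (iter j (fun z => s (a z)) y) = iter j (face_next s a) (a y).
  by elim: j => //= j <-.
by apply: (inv_inj aK); rewrite conj face5.
Qed.

Lemma kinded_relators ne (D : finType) (s a : D -> D) (k : D -> 'I_5) :
  kinded_map ne s a k -> forall x w, w \in relators ne (k x) -> walk s a w x = x.
Proof.
case=> _ aK face5 deg _ x w; rewrite !inE.
case/or4P => /eqP ->; rewrite ?walk_flatten_nseq ?walk_nseq //.
  exact: (aK x).
exact: (sigma_alpha_period aK face5).
Qed.

Definition kinded_rigid (ne : nat) (B : finType) (sB aB : B -> B) : Prop :=
  forall (D : finType) (s a : D -> D) (k : D -> 'I_5),
    kinded_map ne s a k -> (exists x, k x = kT) -> #|D| = #|{: B * 'I_5}| ->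
    exists phi : D -> B * 'I_5,
      [/\ bijective phi, forall x, phi (s x) = ps_sigma sB aB (phi x),
          forall x, phi (a x) = ps_alpha aB (phi x) & forall x, (phi x).2 = k x].

(* The pentagonal subdivision written for any type, with the inverse of the
   face permutation given as an explicit iterate (tiles with [m.+1] sides);
   this version is computable on encodings. *)
Section SubdivisionOn.
Variables (X : Type) (sX aX : X -> X) (m : nat).

Definition psub_sigma (x : X * 'I_5) : X * 'I_5 :=
  let: (d, k) := x in
  match nat_of_ord k with
  | 0 => (sX d, kA) | 1 => (d, kC) | 2 => (d, kS) | 3 => (d, kB)
  | _ => (iter m (fun d => aX (sX d)) d, kT)
  end.

Definition psub_alpha (x : X * 'I_5) : X * 'I_5 :=
  let: (d, k) := x in
  match nat_of_ord k with
  | 0 => (d, kB) | 1 => (d, kA) | 2 => (aX d, kC) | 3 => (d, kT) | _ => (d, kS)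
  end.

End SubdivisionOn.

Section SubdivisionMorph.
Variables (X Y : Type) (sX aX : X -> X) (sY aY : Y -> Y) (h : X -> Y).
Hypotheses (h_s : forall x, h (sX x) = sY (h x)) (h_a : forall x, h (aX x) = aY (h x)).
Definition psub_map (x : X * 'I_5) : Y * 'I_5 := (h x.1, x.2).

Lemma psub_map_sigma m x : psub_map (psub_sigma sX aX m x) = psub_sigma sY aY m (psub_map x).
Proof.
case: x => d [[|[|[|[|[|k]]]]] lt] //=; rewrite /psub_map /= ?h_s //.
by congr pair; elim: m => //= m IH; rewrite h_a h_s IH.
Qed.

Lemma psub_map_alpha x : psub_map (psub_alpha aX x) = psub_alpha aY (psub_map x).
Proof. by case: x => d [[|[|[|[|[|k]]]]] lt] //=; rewrite /psub_map /= h_a. Qed.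

End SubdivisionMorph.

Lemma periodic_inj (T : Type) (f : T -> T) m :
  (forall x, iter m.+1 f x = x) -> injective f.
Proof. by move=> per; apply: (can_inj (g := iter m f)) => x; rewrite -iterSr. Qed.

Lemma ps_sigmaE (B : finType) (sB aB : B -> B) m :
  (forall d, iter m.+1 (face_next sB aB) d = d) ->
  ps_sigma sB aB =1 psub_sigma sB aB m.
Proof.
move=> f_ord; have f_inj := periodic_inj f_ord.
case=> d [[|[|[|[|[|k]]]]] lt] //=.
by congr pair; apply: (f_inj); rewrite (f_finv f_inj) -iterS f_ord.
Qed.

Lemma ps_alphaE (B : finType) (aB : B -> B) : ps_alpha aB =1 psub_alpha aB.
Proof. by case=> d [[|[|[|[|[|k]]]]] lt]. Qed.

Section SubdivisionIso.
Variables (B : finType) (sB aB : B -> B) (m : nat).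
Hypothesis face_period : forall d, iter m.+1 (face_next sB aB) d = d.
Variables (X : eqType) (sX aX : X -> X) (code : B -> X).
Hypotheses (code_inj : injective code) (code_s : forall d, code (sB d) = sX (code d)).
Hypothesis code_a : forall d, code (aB d) = aX (code d).
Variables (b0 : B) (c0 : X) (ne rounds fuel : nat).
Hypothesis code_b0 : code b0 = c0.
Hypothesis cert : certify (relators ne) kind_sigma kind_alpha (psub_sigma sX aX m)
  (psub_alpha aX) snd (c0, kT) rounds fuel.

Theorem certified_rigid : kinded_rigid ne sB aB.
Proof.
move=> D s a k km [x0 kx0] card_D; have [[ks ka] _ _ _ conn] := km.
apply: (certified_iso cert (F := psub_map code) (t0 := (b0, kT)) _ _ _ _ _
  ks ka (kinded_relators km) (x0 := x0)) => //.
- by move=> [d i] [d' i'] [/code_inj -> ->].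
- by move=> t; rewrite (ps_sigmaE face_period) (psub_map_sigma code_s code_a).
- by move=> t; rewrite ps_alphaE (psub_map_alpha code_a).
- by rewrite /psub_map /= code_b0.
Qed.

End SubdivisionIso.

Definition cube_code (x : cube_dart) : bool * bool * bool * nat :=
  (x.1 (@Ordinal 3 0 isT), x.1 (@Ordinal 3 1 isT), x.1 (@Ordinal 3 2 isT), nat_of_ord x.2).

Definition cube_code_sigma (u : bool * bool * bool * nat) : bool * bool * bool * nat :=
  let: (b0, b1, b2, i) := u in (b0, b1, b2, if b0 (+) b1 (+) b2 then (i + 2) %% 3 else i.+1 %% 3).

Definition cube_code_alpha (u : bool * bool * bool * nat) : bool * bool * bool * nat :=
  let: (b0, b1, b2, i) := u in
  (if i == 0 then ~~ b0 else b0, if i == 1 then ~~ b1 else b1, if i == 2 then ~~ b2 else b2, i).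

Definition dod_code (x : dodeca_dart) : seq nat := [seq nat_of_ord (val x k) | k <- enum 'I_5].
Definition dod_code_sigma (u : seq nat) : seq nat := [seq nth 0 [:: 2; 0; 1; 3; 4] j | j <- u].
Definition dod_code_alpha (u : seq nat) : seq nat := [seq nth 0 [:: 3; 4; 2; 0; 1] j | j <- u].

Lemma cube_code_inj : injective cube_code.
Proof.
move=> [v i] [v' i'] [e0 e1 e2 /val_inj ->]; congr pair.
by apply/ffunP => -[[|[|[|k]]] lt] //; [move: e0 | move: e1 | move: e2];
  congr (_ = _); congr fun_of_fin; apply: val_inj.
Qed.

Lemma cube_code_sigmaE x : cube_code (cube_sigma x) = cube_code_sigma (cube_code x).
Proof. by case: x => v [[|[|[|k]]] lt] //; rewrite /cube_sigma /cube_code /parity3 /=; case: (_ (+) _). Qed.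

Lemma cube_code_alphaE x : cube_code (cube_alpha x) = cube_code_alpha (cube_code x).
Proof. by case: x => v [[|[|[|k]]] lt] //; rewrite /cube_alpha /cube_code /= !ffunE. Qed.

Lemma cube_face4 x : iter 4 (face_next cube_sigma cube_alpha) x = x.
Proof.
have code_f y : cube_code (face_next cube_sigma cube_alpha y) =
    cube_code_alpha (cube_code_sigma (cube_code y)).
  by rewrite /face_next cube_code_alphaE cube_code_sigmaE.
apply: cube_code_inj; rewrite (iter_morph (f' := fun u => cube_code_alpha (cube_code_sigma u)) code_f).
case: x => v [[|[|[|k]]] lt] //; rewrite /cube_code /=;
  by case: (v _); case: (v _); case: (v _).
Qed.

Lemma card_cube_subdivision : #|{: cube_dart * 'I_5}| = 120.
Proof. by rewrite !card_prod card_ffun !card_bool !card_ord. Qed.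

Lemma dod_code_inj : injective dod_code.
Proof.
move=> x y /eq_in_map e; apply/val_inj/permP => k; apply: val_inj.
by apply: e; rewrite mem_enum.
Qed.

Lemma tperm_if (T : finType) (x y z : T) :
  tperm x y z = if z == x then y else if z == y then x else z.
Proof.
case: tpermP => [->|->|/eqP/negbTE -> /eqP/negbTE ->]; rewrite ?eqxx //.
by case: eqP => // ->.
Qed.

Lemma dod_code_map (g : {perm 'I_5}) (tab : seq nat) (x : dodeca_dart) :
  (forall k : 'I_5, nat_of_ord (g k) = nth 0 tab k) ->
  [seq nat_of_ord ((val x * g)%g k) | k <- enum 'I_5] = [seq nth 0 tab j | j <- dod_code x].
Proof. by move=> gE; rewrite /dod_code -map_comp; apply: eq_map => k /=; rewrite permM gE. Qed.

Lemma dod_code_sigmaE x : dod_code (dodeca_sigma x) = dod_code_sigma (dod_code x).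
Proof.
apply: dod_code_map => -[[|[|[|[|[|k]]]]] lt] //.
all: by rewrite /dod_s permM !tperm_if.
Qed.

Lemma dod_code_alphaE x : dod_code (dodeca_alpha x) = dod_code_alpha (dod_code x).
Proof.
apply: dod_code_map => -[[|[|[|[|[|k]]]]] lt] //.
all: by rewrite /dod_a permM !tperm_if.
Qed.

Lemma dod_face5 x : iter 5 (face_next dodeca_sigma dodeca_alpha) x = x.
Proof.
pose h j := nth 0 [:: 3; 4; 2; 0; 1] (nth 0 [:: 2; 0; 1; 3; 4] j).
have code_f y : dod_code (face_next dodeca_sigma dodeca_alpha y) = map h (dod_code y).
  by rewrite /face_next dod_code_alphaE dod_code_sigmaE /dod_code_alpha /dod_code_sigma -map_comp.
apply: dod_code_inj; rewrite (iter_morph (f' := map h) code_f).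
have -> : iter 5 (map h) (dod_code x) = map (iter 5 h) (dod_code x).
  by elim: 5 => [|k IH] /=; rewrite ?map_id // IH -map_comp.
rewrite -[RHS]map_id; apply/eq_in_map => j /mapP [k _ ->].
by case: (val x k) => -[|[|[|[|[|m]]]]].
Qed.

Lemma card_dod_subdivision : #|{: dodeca_dart * 'I_5}| = 300.
Proof.
rewrite card_prod card_ord card_sig.
have -> : #|[pred g : {perm 'I_5} | ~~ odd_perm g]| = #|@Alt 'I_5|.
  by apply: eq_card => g; rewrite inE Alt_even.
have := @card_Alt 'I_5; rewrite card_ord => /(_ isT) e.
by apply/eqP; rewrite -(eqn_pmul2l (isT : 0 < 2)) mulnA e.
Qed.

Lemma cube_code0 : cube_code ([ffun=> false], @Ordinal 3 0 isT) = (false, false, false, 0).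
Proof. by rewrite /cube_code /= !ffunE. Qed.

Lemma dod_code1 (even1 : ~~ odd_perm (1 : {perm 'I_5})) :
  dod_code (exist _ 1%g even1) = [:: 0; 1; 2; 3; 4].
Proof. by rewrite /dod_code /=; under eq_map do rewrite perm1; rewrite val_enum_ord. Qed.

Lemma cube_certified : certify (relators 4) kind_sigma kind_alpha
  (psub_sigma cube_code_sigma cube_code_alpha 3) (psub_alpha cube_code_alpha) snd
  (false, false, false, 0, kT) 20 8.
Proof. vm_compute. reflexivity. Qed.

Lemma dod_certified : certify (relators 5) kind_sigma kind_alpha
  (psub_sigma dod_code_sigma dod_code_alpha 4) (psub_alpha dod_code_alpha) snd
  ([:: 0; 1; 2; 3; 4], kT) 25 8.
Proof. vm_compute. reflexivity. Qed.

Lemma cube_rigid : kinded_rigid 4 cube_sigma cube_alpha.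
Proof.
exact: (certified_rigid cube_face4 cube_code_inj cube_code_sigmaE cube_code_alphaE
  cube_code0 cube_certified).
Qed.

Lemma dod_rigid : kinded_rigid 5 dodeca_sigma dodeca_alpha.
Proof.
have even1 : ~~ odd_perm (1 : {perm 'I_5}) by rewrite odd_perm1.
exact: (certified_rigid dod_face5 dod_code_inj dod_code_sigmaE dod_code_alphaE
  (dod_code1 even1) dod_certified).
Qed.

(* Positions in the pentagon are elements of 'I_5, counted from epsilon (at
   0) in the direction of the tile; [j] is the position of delta. *)
Section PentagonLabels.
Local Open Scope ring_scope.

Definition ords5 : seq 'I_5 := [:: 0; 1; 2; 3; 4].

Lemma ords5P (P : 'I_5 -> bool) : reflect (forall k, P k) (all P ords5).
Proof.
apply: (iffP allP) => [H k | H k _]; last exact: H.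
by apply: H; case: k => -[|[|[|[|[|k]]]]] lt.
Qed.

(* Walking along a tile changes the position by +1 or by -1. *)
Definition unit_step (s : 'I_5) : bool := (s == 1) || (s == -1).

(* Positions of two consecutive corners at a vertex of type delta^3,
   epsilon^k or alpha beta gamma (the last three angles being distinct). *)
Definition corner_pair (j l1 l2 : 'I_5) : bool :=
  [|| (l1 == 0) && (l2 == 0), (l1 == j) && (l2 == j)
    | [&& l1 != l2, l1 \notin [:: 0; j] & l2 \notin [:: 0; j]]].

(* The kind of a corner at relative position [r] when delta sits at
   relative position [jr]; [kind_of] measures positions along a step [s]. *)
Definition corner_kind (jr r : 'I_5) : 'I_5 :=
  nth kA (if jr == 2 then [:: kT; kS; kA; kB; kC] else [:: kT; kS; kC; kA; kB]) r.

Definition kind_of (j s l : 'I_5) : 'I_5 := corner_kind (s * j) (s * l).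

(* Around a vertex, kinds rotate as [kind_sigma] or, in a mirrored
   tiling, as its inverse. *)
Definition kind_sigma_inv (k : 'I_5) : 'I_5 := nth kA [:: kA; kS; kB; kC; kT] k.

Definition vertex_kind (j s : 'I_5) : 'I_5 -> 'I_5 :=
  if s * j == 2 then kind_sigma else kind_sigma_inv.

Lemma unit_step_sqr s : unit_step s -> s * s = 1.
Proof.
have /ords5P/(_ s)/implyP H : all (fun s => unit_step s ==> (s * s == 1)) ords5 by [].
by move/H/eqP.
Qed.

Lemma adjacent_self_opp j : unit_step j -> j != - j.
Proof.
have /ords5P/(_ j)/implyP H : all (fun j => unit_step j ==> (j != - j)) ords5 by [].
exact: H.
Qed.

(* At an edge between two epsilon corners, adjacency of delta and epsilon
   forces both tiles to step towards delta. *)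
Lemma adjacent_eps_edge j s1 s2 : unit_step j -> unit_step s1 -> unit_step s2 ->
  corner_pair j (- s2) s1 -> s1 = j /\ s2 = - j.
Proof.
have /ords5P/(_ j)/ords5P/(_ s1)/ords5P/(_ s2) H : all (fun j => all (fun s1 => all (fun s2 =>
    [==> unit_step j, unit_step s1, unit_step s2, corner_pair j (- s2) s1 =>
      (s1 == j) && (s2 == - j)]) ords5) ords5) ords5 by vm_compute.
by move=> uj us1 us2 c; move: H; rewrite uj us1 us2 c => /andP [/eqP -> /eqP ->].
Qed.

(* When delta and epsilon are not adjacent, the two tiles along an edge are
   read in the same direction. *)
Lemma edge_orientation j s1 s2 l1 l2 : j != 0 -> ~~ unit_step j ->
  unit_step s1 -> unit_step s2 -> corner_pair j l1 l2 -> corner_pair j (l2 - s2) (l1 + s1) ->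
  s1 = s2.
Proof.
have /ords5P/(_ j)/ords5P/(_ s1)/ords5P/(_ s2)/ords5P/(_ l1)/ords5P/(_ l2) H :
  all (fun j => all (fun s1 => all (fun s2 => all (fun l1 => all (fun l2 =>
    [==> j != 0, ~~ unit_step j, unit_step s1, unit_step s2, corner_pair j l1 l2,
         corner_pair j (l2 - s2) (l1 + s1) => s1 == s2]) ords5) ords5) ords5) ords5) ords5.
  by vm_compute.
move=> j0 nadj us1 us2 c1 c2; move: H; rewrite j0 nadj us1 us2 c1 c2.
by move/eqP.
Qed.

(* ... and the kinds of the corners along the edge are related as in a
   pentagonal subdivision. *)
Lemma kind_transition j s l1 l2 : j != 0 -> ~~ unit_step j -> unit_step s ->
  corner_pair j l1 l2 -> corner_pair j (l2 - s) (l1 + s) ->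
  kind_of j s l2 = vertex_kind j s (kind_of j s l1) /\
  kind_of j s (l1 + s) = kind_alpha (kind_of j s l2).
Proof.
have /ords5P/(_ j)/ords5P/(_ s)/ords5P/(_ l1)/ords5P/(_ l2) H :
  all (fun j => all (fun s => all (fun l1 => all (fun l2 =>
    [==> j != 0, ~~ unit_step j, unit_step s, corner_pair j l1 l2, corner_pair j (l2 - s) (l1 + s) =>
      (kind_of j s l2 == vertex_kind j s (kind_of j s l1)) &&
      (kind_of j s (l1 + s) == kind_alpha (kind_of j s l2))]) ords5) ords5) ords5) ords5.
  by vm_compute.
move=> j0 nadj us c1 c2; move: H; rewrite j0 nadj us c1 c2.
by case/andP => /eqP -> /eqP ->.
Qed.

Lemma kind_of_special j s l : j != 0 -> ~~ unit_step j -> unit_step s ->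
  (kind_of j s l = kA <-> l = j) /\ (kind_of j s l = kT <-> l = 0).
Proof.
have /ords5P/(_ j)/ords5P/(_ s)/ords5P/(_ l) H :
  all (fun j => all (fun s => all (fun l =>
    [==> j != 0, ~~ unit_step j, unit_step s =>
      ((kind_of j s l == kA) == (l == j)) && ((kind_of j s l == kT) == (l == 0))]) ords5) ords5) ords5.
  by vm_compute.
move=> j0 nadj us; move: H; rewrite j0 nadj us => /andP [/eqP eA /eqP eT].
split; split=> e.
- by apply/eqP; rewrite -eA e.
- by apply/eqP; rewrite eA e.
- by apply/eqP; rewrite -eT e.
- by apply/eqP; rewrite eT e.
Qed.

Lemma corner_pair_eps j l1 l2 : j != 0 -> corner_pair j l1 l2 -> (l1 == 0) = (l2 == 0).
Proof.
have /ords5P/(_ j)/ords5P/(_ l1)/ords5P/(_ l2) H : all (fun j => all (fun l1 => all (fun l2 =>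
    [==> j != 0, corner_pair j l1 l2 => (l1 == 0) == (l2 == 0)]) ords5) ords5) ords5 by vm_compute.
by move=> j0 c; move: H; rewrite j0 c => /eqP.
Qed.

Lemma kind_sigma_invK : cancel kind_sigma_inv kind_sigma.
Proof. by case=> -[|[|[|[|[|k]]]]] lt; apply: val_inj. Qed.

Lemma unit_step_opp s : unit_step (- s) = unit_step s.
Proof.
have /ords5P/(_ s)/eqP -> // : all (fun s => unit_step (- s) == unit_step s) ords5 by [].
Qed.

Lemma kind_mid (k : 'I_5) : (k != kA /\ k != kT) <-> (k = kB \/ k = kC \/ k = kS).
Proof.
split=> [[nA nT]|h]; last by case: h => [|[|]] ->.
case: k nA nT => -[|[|[|[|[|k]]]]] lt //= _ _; [left | right; left | right; right]; exact: val_inj.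
Qed.

End PentagonLabels.

Definition eqR (x y : R) : bool := if Req_EM_T x y then true else false.

Lemma eqRP : Equality.axiom eqR.
Proof. by move=> x y; rewrite /eqR; case: Req_EM_T => h; constructor. Qed.

HB.instance Definition _ := hasDecEq.Build R eqRP.

Lemma In_mem (T : eqType) (x : T) (s : seq T) : List.In x s <-> x \in s.
Proof.
elim: s => //= y s IH; rewrite inE; split.
- by case=> [->|/IH ->]; rewrite ?eqxx ?orbT.
- by case/orP => [/eqP ->|/IH]; [left | right].
Qed.

Lemma NoDup_uniq (T : eqType) (s : seq T) : List.NoDup s -> uniq s.
Proof. by elim=> //= x s' nx _ ->; rewrite andbT; apply/negP => /In_mem. Qed.

Lemma Permutation_mem (T : eqType) (s t : seq T) : Permutation s t -> s =i t.
Proof.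
move=> st x; apply/idP/idP => /In_mem => [/(Permutation_in _ st)|/(Permutation_in _ (Permutation_sym st))];
  by move/In_mem.
Qed.

Lemma Permutation_size (T : Type) (s t : seq T) : Permutation s t -> size s = size t.
Proof.
have len u : size u = length u by elim: u => //= ? ? ->.
by move/Permutation_length; rewrite -!len.
Qed.

Lemma nth_rot5 (T : Type) (x0 : T) (q : seq T) k i : size q = 5 -> k <= 5 -> i < 5 ->
  nth x0 (rot k q) i = nth x0 q ((k + i) %% 5).
Proof.
move=> sq lek lti; rewrite /rot nth_cat size_drop sq.
by case: ltnP => h; [rewrite nth_drop | rewrite nth_take ?sq]; try lia; congr nth; lia.
Qed.

Lemma natr_mod5 m : ((m %% 5)%:R = m%:R :> 'I_5)%R.
Proof. by apply: val_inj; rewrite !Zp_nat /= modn_mod. Qed.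

Section Tiling.
Variables (D : finType) (sigma alpha : D -> D) (angle : D -> R).
Variables (a b c d e : R) (p : seq R) (ne : nat).
Hypothesis distinct : List.NoDup [:: a; b; c; d; e].
Hypothesis p_perm : Permutation p [:: a; b; c; d; e].
Hypothesis congruent : angle_congruent sigma alpha angle p.
Hypothesis vertex_types : forall x,
  Permutation (vertex_angles sigma angle x) [:: a; b; c]
  \/ vertex_angles sigma angle x = [:: d; d; d]
  \/ vertex_angles sigma angle x = nseq ne e.

Local Notation f := (face_next sigma alpha).

Lemma sigma_inj : injective sigma.
Proof. by case: congruent => [[[]]]. Qed.

Lemma alphaK : involutive alpha.
Proof. by case: congruent => [[[]]]. Qed.

Lemma face_period x : iter 5 f x = x.
Proof.
case: congruent => [[_ order5 _ _] _ _ _]; rewrite -{1}(order5 x) iter_order //.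
by move=> y z /(inv_inj alphaK) /sigma_inj.
Qed.

Lemma connected x y : connect (fun u v => (v == sigma u) || (v == alpha u)) x y.
Proof. by case: congruent => [[[]]]. Qed.

Lemma euler : (nb_vertices sigma + nb_faces sigma alpha).*2 = #|D| + 4.
Proof. by case: congruent => [[[]]]. Qed.

Lemma tile_rot x : exists k, tile_angles sigma alpha angle x = rot k p
  \/ tile_angles sigma alpha angle x = rot k (rev p).
Proof. by case: congruent. Qed.

Lemma degree3 x : 3 <= fingraph.order sigma x.
Proof. by case: congruent => [[_ _ _ deg] _ _ _]; exact: deg. Qed.

Lemma abc_de :
  [/\ uniq [:: a; b; c], d \notin [:: a; b; c], e \notin [:: a; b; c] & d != e].
Proof.
have := NoDup_uniq distinct; rewrite -[[:: a; b; c; d; e]]/([:: a; b; c] ++ [:: d; e]) cat_uniq.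
case/and3P => uabc /hasPn notin /=; rewrite inE andbT => de.
by split=> //; [apply: (notin d) | apply: (notin e)]; rewrite !inE eqxx ?orbT.
Qed.

Lemma uniq_p : uniq p.
Proof. exact: NoDup_uniq (Permutation_NoDup (Permutation_sym p_perm) distinct). Qed.

Lemma size_p : size p = 5.
Proof. exact: Permutation_size p_perm. Qed.

Lemma mem_p v : (v \in p) = (v \in [:: a; b; c; d; e]).
Proof. exact: (Permutation_mem p_perm v). Qed.

Lemma vertex_cases x :
  [\/ [/\ angle x \in [:: a; b; c], angle (sigma x) \in [:: a; b; c],
          angle x != angle (sigma x) & fingraph.order sigma x = 3],
      [/\ angle x = d, angle (sigma x) = d & fingraph.order sigma x = 3]
    | [/\ angle x = e, angle (sigma x) = e & fingraph.order sigma x = ne]].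
Proof.
have [n ordn] : exists n, fingraph.order sigma x = n.+3.
  by exists (fingraph.order sigma x - 3); rewrite -addn3 subnK ?degree3.
have va : vertex_angles sigma angle x =
    [:: angle x, angle (sigma x) & map angle (traject sigma (sigma (sigma x)) n.+1)].
  by rewrite /vertex_angles /fingraph.orbit ordn.
have size_va : size (vertex_angles sigma angle x) = fingraph.order sigma x.
  by rewrite size_map size_orbit.
case: (vertex_types x) => [perm | [ddd | eee]].
- have mem := Permutation_mem perm; have size3 := Permutation_size perm.
  have : uniq (vertex_angles sigma angle x).
    apply: (leq_size_uniq (s1 := [:: a; b; c])); last by rewrite size3.
      by case: abc_de.
    by move=> v; rewrite mem.
  rewrite va /= inE negb_or => /andP [/andP [neq _] _].
  by constructor 1; split; rewrite -?mem ?va ?inE ?eqxx ?orbT // -size_va size3.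
- have ord3 : fingraph.order sigma x = 3 by rewrite -size_va ddd.
  by move: ddd; rewrite va => -[-> -> _]; constructor 2.
- have ordne : fingraph.order sigma x = ne by rewrite -size_va eee size_nseq.
  by move: eee; rewrite va -ordne ordn => -[-> -> _]; constructor 3.
Qed.

Lemma angle_in x : angle x \in [:: a; b; c; d; e].
Proof.
by case: (vertex_cases x) => [[abc _ _ _]|[-> _ _]|[-> _ _]]; rewrite !inE ?eqxx ?orbT //;
  move: abc; rewrite !inE => /or3P [] ->; rewrite ?orbT.
Qed.

Local Open Scope ring_scope.

Definition pos (v : R) : 'I_5 := (index v p)%:R.

Lemma pos_nth i : (i < 5)%N -> pos (nth R0 p i) = i%:R.
Proof. by move=> lt; rewrite /pos index_uniq ?size_p // uniq_p. Qed.

Lemma pos_inj u v : u \in p -> v \in p -> pos u = pos v -> u = v.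
Proof.
move=> up vp; rewrite /pos !Zp_nat => /(congr1 val) /=.
rewrite !modn_small -?size_p ?index_mem // => /index_inj; exact.
Qed.

Definition label x : 'I_5 := pos (angle x) - pos e.

Definition delta_pos : 'I_5 := pos d - pos e.

Lemma label_value x v : v \in p -> (label x == pos v - pos e) = (angle x == v).
Proof.
move=> vp; rewrite /label (inj_eq (addIr _)); apply/eqP/eqP => [|-> //].
by apply: pos_inj; rewrite // mem_p angle_in.
Qed.

Lemma mem_p_de : d \in p /\ e \in p.
Proof. by rewrite !mem_p !inE !eqxx !orbT. Qed.

Lemma label_eps x : (label x == 0) = (angle x == e).
Proof. by rewrite -label_value ?subrr //; case: mem_p_de. Qed.

Lemma label_delta x : (label x == delta_pos) = (angle x == d).
Proof. by rewrite label_value //; case: mem_p_de. Qed.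

Lemma label_eq x y : (label x == label y) = (angle x == angle y).
Proof. by rewrite {1}/label label_value // mem_p angle_in. Qed.

Lemma delta_pos_nz : delta_pos != 0.
Proof.
case: abc_de => _ _ _; apply: contra => /eqP /(congr1 (fun l => l + pos e)).
by rewrite subrK add0r => /pos_inj -> //; case: mem_p_de.
Qed.

Lemma label_abc x : angle x \in [:: a; b; c] -> label x \notin [:: 0; delta_pos].
Proof.
case: abc_de => _ dabc eabc _ ax; rewrite !inE label_eps label_delta negb_or.
by apply/andP; split; apply/eqP => ex; [move: eabc | move: dabc]; rewrite -ex ax.
Qed.

Lemma vertex_corner x : corner_pair delta_pos (label x) (label (sigma x)).
Proof.
case: (vertex_cases x) => [[ax asx neq _]|[ax asx _]|[ax asx _]].
- by apply/or3P; constructor 3; rewrite label_eq neq !label_abc.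
- by rewrite /corner_pair !label_delta ax asx eqxx orbT.
- by rewrite /corner_pair !label_eps ax asx eqxx.
Qed.

Lemma tile_positions x : exists2 t, unit_step t &
  forall i, (i < 5)%N -> pos (angle (iter i f x)) = pos (angle x) + i%:R * t.
Proof.
have tile i : (i < 5)%N -> angle (iter i f x) = nth R0 (tile_angles sigma alpha angle x) i.
  by move=> lt; rewrite /tile_angles (nth_map x) ?size_traject // nth_traject.
have [k rotk] := tile_rot x.
have [k' k'le rotk'] : exists2 k', (k' <= 5)%N & forall q : seq R, size q = 5 -> rot k q = rot k' q.
  case: (leqP k 5) => [le|gt]; first by exists k.
  by exists 0%N => // q sq; rewrite rot0 rot_oversize // sq ltnW.
case: rotk => rotk.
- have posi i : (i < 5)%N -> pos (angle (iter i f x)) = k'%:R + i%:R.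
    by move=> lt; rewrite tile // rotk rotk' ?size_p // nth_rot5 ?size_p // pos_nth ?ltn_mod // natr_mod5 natrD.
  exists 1 => // i lt; by rewrite posi // (posi 0%N) // addr0 mulr1.
- have posi i : (i < 5)%N -> pos (angle (iter i f x)) = 4%:R - (k'%:R + i%:R).
    move=> lt; rewrite tile // rotk rotk' ?size_rev ?size_p // nth_rot5 ?size_rev ?size_p //.
    rewrite nth_rev ?size_p ?ltn_mod // pos_nth; last by lia.
    rewrite subSS natrB; last by rewrite -ltnS ltn_mod.
    by rewrite natr_mod5 natrD.
  exists (-1) => // i lt; rewrite posi // (posi 0%N) // addr0.
  by rewrite mulrN1 opprD addrA.
Qed.

(* The direction in which the tile of a corner reads the pentagon. *)
Definition step x : 'I_5 := label (f x) - label x.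

Lemma label_face x : label (f x) = label x + step x.
Proof. by rewrite /step; ring. Qed.

Lemma step_tile x : unit_step (step x) /\ step (f x) = step x.
Proof.
have [t ut posi] := tile_positions x.
have lab i : (i < 5)%N -> label (iter i f x) = label x + i%:R * t.
  by move=> lt; rewrite /label posi //; ring.
have l1 := lab 1%N isT; have l2 := lab 2%N isT; rewrite /= in l1 l2.
have st : step x = t by rewrite /step l1; ring.
by rewrite st; split=> //; rewrite /step l2 l1; ring.
Qed.

Lemma step_unit x : unit_step (step x).
Proof. by case: (step_tile x). Qed.

Lemma step_face x : step (f x) = step x.
Proof. by case: (step_tile x). Qed.

Lemma label_iter i x : label (iter i f x) = label x + i%:R * step x.
Proof.
elim: i => [|i IH] /=; first by rewrite mul0r addr0.
have step_iter : step (iter i f x) = step x by elim: i {IH} => //= i <-; rewrite step_face.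
by rewrite label_face IH step_iter -natr1; ring.
Qed.

(* Across the edge [sigma x], the corner of the other tile at the far end:
   it sits at the same vertex as [f x] and is followed by [sigma x]. *)
Definition edge_mate x := finv sigma (f x).

Lemma sigma_mate x : sigma (edge_mate x) = f x.
Proof. exact: (f_finv sigma_inj). Qed.

Lemma face_mate x : f (edge_mate x) = sigma x.
Proof. by rewrite /face_next sigma_mate /face_next alphaK. Qed.

Lemma edge_corner x :
  corner_pair delta_pos (label (sigma x) - step (edge_mate x)) (label x + step x).
Proof.
have := vertex_corner (edge_mate x).
by rewrite sigma_mate label_face -face_mate label_face addrK.
Qed.

(* By Euler's formula the map is not empty ... *)
Lemma D_nonempty : (0 < #|D|)%N.
Proof.
rewrite lt0n; apply/negP => /eqP D0; have := euler; rewrite D0.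
suff [-> ->] : nb_vertices sigma = 0%N /\ nb_faces sigma alpha = 0%N by [].
by split; apply/eqP; rewrite -leqn0 -D0 /nb_vertices /nb_faces /n_comp_mem; apply: max_card.
Qed.

(* ... so it has an epsilon corner, found by walking along a tile. *)
Lemma exists_eps : exists y, label y = 0.
Proof.
have /card_gt0P [x _] := D_nonempty.
exists (iter (nat_of_ord (- label x * step x : 'I_5)) f x).
rewrite label_iter natr_Zp -mulrA.
by rewrite unit_step_sqr ?step_unit // mulr1 addrN.
Qed.

Lemma eps_sigma x : (label (sigma x) == 0) = (label x == 0).
Proof. by rewrite (corner_pair_eps delta_pos_nz (vertex_corner x)). Qed.

(* delta and epsilon are not adjacent in the pentagon: otherwise both tiles
   at an edge between epsilon corners would step towards delta, which is
   impossible since they read the edge in opposite directions. *)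
Lemma delta_nonadjacent : ~~ unit_step delta_pos.
Proof.
apply/negP => adj.
have eps_steps z : label z = 0 -> step z = delta_pos /\ step (edge_mate z) = - delta_pos.
  move=> lz; have lsz : label (sigma z) = 0 by apply/eqP; rewrite eps_sigma lz.
  apply: adjacent_eps_edge (step_unit _) (step_unit _) _ => //.
  by have := edge_corner z; rewrite lz lsz !add0r.
have [y ly] := exists_eps; have [_ mate_y] := eps_steps y ly.
have lsy : label (sigma y) = 0 by apply/eqP; rewrite eps_sigma ly.
have [sy _] := eps_steps (sigma y) lsy.
move: sy; rewrite -face_mate step_face mate_y => h.
by move: (adjacent_self_opp adj); rewrite h eqxx.
Qed.

(* Hence all tiles are read in the same direction. *)
Lemma step_mate x : step (edge_mate x) = step x.
Proof.
apply/esym/(edge_orientation delta_pos_nz delta_nonadjacent (step_unit _) (step_unit _)).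
  exact: vertex_corner.
exact: edge_corner.
Qed.

Lemma step_sigma x : step (sigma x) = step x.
Proof. by rewrite -face_mate step_face step_mate. Qed.

Lemma face_finv x : f (finv sigma x) = alpha x.
Proof. by rewrite /face_next (f_finv sigma_inj). Qed.

Lemma step_alpha x : step (alpha x) = step x.
Proof. by rewrite -face_finv step_face -{2}(f_finv sigma_inj x) step_sigma. Qed.

Definition orientation : 'I_5 := if [pick x : D] is Some x then step x else 1.

Lemma stepE x : step x = orientation.
Proof.
have const y z : step y = step z.
  have /connectP [q path_q ->] := connected y z.
  elim: q y path_q => //= u q IH y /andP [/orP [] /eqP -> /IH <-].
  - by rewrite step_sigma.
  - by rewrite step_alpha.
by rewrite /orientation; case: pickP => [y _ | /(_ x) //]; apply: const.
Qed.

Definition kind x : 'I_5 := kind_of delta_pos orientation (label x).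

Lemma kind_steps x : kind (sigma x) = vertex_kind delta_pos orientation (kind x) /\
  kind (f x) = kind_alpha (kind (sigma x)).
Proof.
have edge : corner_pair delta_pos (label (sigma x) - step x) (label x + step x).
  by rewrite -{1}(step_mate x); exact: edge_corner.
have [ks kf] := kind_transition delta_pos_nz delta_nonadjacent (step_unit x) (vertex_corner x) edge.
by rewrite !stepE in ks kf; rewrite /kind label_face stepE kf ks.
Qed.

Lemma kind_alpha_step x : kind (alpha x) = kind_alpha (kind x).
Proof. by rewrite -face_finv (kind_steps _).2 (f_finv sigma_inj). Qed.

Lemma kind_delta x : kind x = kA <-> angle x = d.
Proof.
have [kA_iff _] := kind_of_special (label x) delta_pos_nz delta_nonadjacent (step_unit x).
rewrite stepE in kA_iff; split=> h.
- by apply/eqP; rewrite -label_delta; apply/eqP/kA_iff.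
- by apply/kA_iff/eqP; rewrite label_delta h.
Qed.

Lemma kind_eps x : kind x = kT <-> angle x = e.
Proof.
have [_ kT_iff] := kind_of_special (label x) delta_pos_nz delta_nonadjacent (step_unit x).
rewrite stepE in kT_iff; split=> h.
- by apply/eqP; rewrite -label_eps; apply/eqP/kT_iff.
- by apply/kT_iff/eqP; rewrite label_eps h.
Qed.

Lemma kind_abc x :
  (angle x = a \/ angle x = b \/ angle x = c) <-> (kind x = kB \/ kind x = kC \/ kind x = kS).
Proof.
have [_ dabc eabc _] := abc_de.
have eA : (kind x == kA) = (angle x == d) by apply/eqP/eqP => /kind_delta.
have eT : (kind x == kT) = (angle x == e) by apply/eqP/eqP => /kind_eps.
rewrite -kind_mid eA eT; split.
- move=> h; have ax : angle x \in [:: a; b; c].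
    by rewrite !inE; case: h => [|[|]] ->; rewrite eqxx ?orbT.
  by split; apply/eqP => ex; [move: dabc | move: eabc]; rewrite -ex ax.
- case=> /negbTE nd /negbTE nE; move: (angle_in x); rewrite !inE nd nE !orbF.
  by case/or3P => /eqP ->; auto.
Qed.

Lemma degree_kind x : fingraph.order sigma x = (if kind x == kT then ne else 3)%N.
Proof.
have [_ _ eabc de] := abc_de.
have eT : (kind x == kT) = (angle x == e) by apply/eqP/eqP => /kind_eps.
rewrite eT; case: (vertex_cases x) => [[ax _ _ ->]|[-> _ ->]|[-> _ ->]]; rewrite ?eqxx //.
- by case: eqP ax => // ->; rewrite (negbTE eabc).
- by rewrite (negbTE de).
Qed.

Lemma kind_eps_label x : (kind x == kT) = (label x == 0).
Proof. by rewrite label_eps; apply/eqP/eqP => /kind_eps. Qed.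

Lemma face_inj : injective f.
Proof. exact: periodic_inj face_period. Qed.

Definition eps_corners : {pred D} := [pred x | label x == 0].

Lemma card_label_class l : #|[pred x | label x == l]| = #|eps_corners|.
Proof.
have shift l' : #|[pred x | label x == l']| = #|[pred x | label x == l' + orientation]|.
  rewrite (@eq_card _ _ [preim f of [pred y | label y == l' + orientation]]); last first.
    by move=> x; rewrite !inE /= label_face stepE (inj_eq (addIr _)).
  rewrite card_preim; last exact: face_inj.
  by apply: eq_card => y; rewrite !inE (injF_onto face_inj y).
have shifts i : #|[pred x | label x == l]| = #|[pred x | label x == l + i%:R * orientation]|.
  elim: i => [|i IH]; first by rewrite mul0r addr0.
  by rewrite IH shift -natr1 mulrDl mul1r addrA.
rewrite (shifts (nat_of_ord (- l * orientation))) natr_Zp -mulrA.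
have [x _] := card_gt0P D_nonempty.
by rewrite -(stepE x) unit_step_sqr ?step_unit // mulr1 addrN.
Qed.

Lemma card_tiling_classes : #|D| = (5 * #|eps_corners|)%N.
Proof.
rewrite -[LHS]sum1_card (partition_big label xpredT) //=.
rewrite (eq_bigr (fun _ => #|eps_corners|)); last first.
  move=> l _; rewrite -(card_label_class l) -sum1_card.
  by apply: eq_bigl => x; rewrite !inE.
by rewrite sum_nat_const card_ord mulnC.
Qed.

(* Euler's formula: with m epsilon corners there are m/ne epsilon vertices,
   4m/3 other vertices, m tiles and 5m darts, so that 6m = ne m + 12 ne. *)
Lemma tiling_count : (6 * #|D| = ne * #|D| + 60 * ne)%N.
Proof.
set m := #|eps_corners|.
have card_D := card_tiling_classes; rewrite -/m in card_D.
pose S := eps_corners.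
have faces : (nb_faces sigma alpha * 5 = #|D|)%N.
  rewrite /nb_faces; apply: (fcard_order_set face_inj); last by move=> x y _.
  by apply/subsetP => x _; rewrite inE; case: congruent => [[_ order5 _ _] _ _ _]; rewrite order5.
have closedS : fclosed sigma S by move=> x y /eqP <-; rewrite !inE eps_sigma.
have eps_vertices : (fcard sigma S * ne = #|S|)%N.
  apply: (fcard_order_set sigma_inj) => //; apply/subsetP => x.
  by rewrite !inE degree_kind kind_eps_label => ->.
have other_vertices : (fcard sigma [predC S] * 3 = #|[predC S]|)%N.
  apply: (fcard_order_set sigma_inj); last exact: predC_closed.
  by apply/subsetP => x; rewrite !inE degree_kind kind_eps_label => /negbTE ->.
have compl := cardC S.
have eu := euler; rewrite /nb_vertices (n_compC S) in eu.
rewrite -/m in eps_vertices compl; rewrite card_D in faces compl *.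
nia.
Qed.

Lemma vertex_period x : iter (if kind x == kT then ne else 3) sigma x = x.
Proof. by rewrite -degree_kind iter_order //; exact: sigma_inj. Qed.

Lemma kinded_direct : orientation * delta_pos = 2 -> kinded_map ne sigma alpha kind.
Proof.
move=> dir; split=> //; first split.
- by move=> x; rewrite (kind_steps x).1 /vertex_kind dir eqxx.
- exact: kind_alpha_step.
- exact: alphaK.
- exact: face_period.
- exact: vertex_period.
- exact: connected.
Qed.

Lemma kinded_mirror : orientation * delta_pos != 2 -> kinded_map ne (finv sigma) alpha kind.
Proof.
move=> mir; split; first split.
- move=> x; rewrite -[in RHS](f_finv sigma_inj x) (kind_steps _).1 /vertex_kind (negbTE mir).
  by rewrite kind_sigma_invK.
- exact: kind_alpha_step.
- exact: alphaK.
- move=> x; have g5 := sigma_alpha_period alphaK face_period.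
  have back j y : iter j (face_next (finv sigma) alpha) (iter j (fun z => sigma (alpha z)) y) = y.
    by elim: j => // j IH; rewrite iterSr iterS /face_next (finv_f sigma_inj) alphaK.
  by rewrite -{1}(g5 x) back.
- move=> x; rewrite -[X in iter X](degree_kind x) -(order_finv sigma_inj) iter_order //.
  exact: (finv_inj sigma_inj).
- move=> x y; apply: connect_sub (connected x y) => u v /orP [] /eqP ->.
  + apply: (connect_sub (e := frel (finv sigma))) => [u' v' /eqP <- |].
      by apply: connect1; rewrite eqxx.
    by rewrite same_fconnect_finv ?fconnect1 //; exact: sigma_inj.
  + by apply: connect1; rewrite eqxx orbT.
Qed.

Theorem tiling_subdivision (B : finType) (sB aB : B -> B) :
  kinded_rigid ne sB aB -> #|D| = #|{: B * 'I_5}| ->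
  is_psubdiv_of sigma alpha angle a b c d e sB aB.
Proof.
move=> rigid card_D.
have eps : exists x, kind x = kT.
  by have [y ly] := exists_eps; exists y; apply/eqP; rewrite kind_eps_label ly.
have angles (phi : D -> B * 'I_5) : (forall x, (phi x).2 = kind x) -> forall x,
    [/\ angle x = d <-> (phi x).2 = kA, angle x = e <-> (phi x).2 = kT
      & (angle x = a \/ angle x = b \/ angle x = c) <->
        ((phi x).2 = kB \/ (phi x).2 = kC \/ (phi x).2 = kS)].
  move=> phi_k x; rewrite phi_k.
  by split; [apply: iff_sym; exact: kind_delta | apply: iff_sym; exact: kind_eps | exact: kind_abc].
case: (eqVneq (orientation * delta_pos) 2) => [dir | mir].
- have [phi [bij phi_s phi_a phi_k]] := rigid _ _ _ _ (kinded_direct dir) eps card_D.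
  by exists phi; split=> //; [left | exact: angles].
- have [phi [bij phi_s phi_a phi_k]] := rigid _ _ _ _ (kinded_mirror mir) eps card_D.
  exists phi; split=> //; last exact: angles.
  by right=> x; rewrite -phi_s (finv_f sigma_inj).
Qed.

Lemma tiling_de_not_adjacent : de_not_adjacent sigma alpha angle d e.
Proof.
move=> x; split=> -[ax afx].
- have lx : label x = delta_pos by apply/eqP; rewrite label_delta ax.
  have lfx : label (f x) = 0 by apply/eqP; rewrite label_eps afx.
  move: (step_unit x); rewrite /step lfx lx sub0r unit_step_opp.
  by rewrite (negbTE delta_nonadjacent).
- have lx : label x = 0 by apply/eqP; rewrite label_eps ax.
  have lfx : label (f x) = delta_pos by apply/eqP; rewrite label_delta afx.
  move: (step_unit x); rewrite /step lfx lx subr0.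
  by rewrite (negbTE delta_nonadjacent).
Qed.

End Tiling.

Theorem mainTheorem7 :
  (* vertex types  alpha beta gamma,  delta^3,  epsilon^4  :  the cube *)
  (forall (D : finType) (sigma alpha : D -> D) (angle : D -> R)
          (a b c d e : R) (p : seq R),
     List.NoDup [:: a; b; c; d; e] ->
     Permutation p [:: a; b; c; d; e] ->
     angle_congruent sigma alpha angle p ->
     (forall x, Permutation (vertex_angles sigma angle x) [:: a; b; c]
                \/ vertex_angles sigma angle x = [:: d; d; d]
                \/ vertex_angles sigma angle x = [:: e; e; e; e]) ->
     is_psubdiv_of sigma alpha angle a b c d e cube_sigma cube_alpha
     /\ de_not_adjacent sigma alpha angle d e)
  /\
  (* vertex types  alpha beta gamma,  delta^3,  epsilon^5  :  the dodecahedron *)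
  (forall (D : finType) (sigma alpha : D -> D) (angle : D -> R)
          (a b c d e : R) (p : seq R),
     List.NoDup [:: a; b; c; d; e] ->
     Permutation p [:: a; b; c; d; e] ->
     angle_congruent sigma alpha angle p ->
     (forall x, Permutation (vertex_angles sigma angle x) [:: a; b; c]
                \/ vertex_angles sigma angle x = [:: d; d; d]
                \/ vertex_angles sigma angle x = [:: e; e; e; e; e]) ->
     is_psubdiv_of sigma alpha angle a b c d e dodeca_sigma dodeca_alpha
     /\ de_not_adjacent sigma alpha angle d e).
Proof.
split=> D sigma alpha angle a b c d e p distinct p_perm congruent types.
- split; last exact: (tiling_de_not_adjacent (ne := 4) distinct p_perm congruent types).
  apply: (tiling_subdivision (ne := 4) distinct p_perm congruent types cube_rigid).
  have := tiling_count (ne := 4) distinct p_perm congruent types.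
  by rewrite card_cube_subdivision; lia.
- split; last exact: (tiling_de_not_adjacent (ne := 5) distinct p_perm congruent types).
  apply: (tiling_subdivision (ne := 5) distinct p_perm congruent types dod_rigid).
  have := tiling_count (ne := 5) distinct p_perm congruent types.
  by rewrite card_dod_subdivision; lia.
Qed.
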